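(* Let $S$ be a numerical semigroup with minimal generators $e<a_1<\dots<a_t$, and let $n\in S$ with $n\equiv i\pmod e$, $0\le i<e$. Then ${\rm adj}(n)\in{\rm adj}(S_i)$ and ${\rm d}_{\max}(n;S)\le|\mathcal R({\rm adj}(n))|$. In particular, $\mathcal R({\rm adj}(n))$ is nonempty.
   Context: A numerical semigroup is a submonoid of $(\mathbb N,+)$ with finite complement in $\mathbb N$. An $S$-factorization of $n\in S$ is a tuple $(c_0,\dots,c_t)\in\mathbb N^{t+1}$ with $c_0e+\sum c_ia_i=n$, of length $\sum c_i$. ${\rm ord}(n;S)$ is the maximal such length, and ${\rm d}_{\max}(n;S)$ is the number of $S$-factorizations of $n$ of length ${\rm ord}(n;S)$. Let $d_i=a_i-e$, $B=\langle e,d_1,\dots,d_t\rangle$ and $\mathcal D=(e,d_1,\dots,d_t)$. A $B^{\mathcal D}$-factorization of $b\in B$ is $(x_0,\dots,x_t)\in\mathbb N^{t+1}$ with $x_0e+\sum x_id_i=b$, of length $\sum x_i$. $\min{\rm ord}(b;B^{\mathcal D})$ is the minimal such length, and $\mathcal P(b)$ is the set of all of them. Put ${\rm adj}(s)=s-{\rm ord}(s;S)e$ for $s\in S$, and $S_i=\{s\in S:s\equiv i\pmod e\}$. Write ${\rm adj}(S_i)=\{{\rm adj}(s):s\in S_i\}=\{u_0<u_1<\cdots\}$. Define $\mathcal R(u_0)=\mathcal P(u_0)$ and, for $j>0$, $\mathcal R(u_j)=\{\mathbf x\in\mathcal P(u_j):|\mathbf x|<\min{\rm ord}(u_{j-1};B^{\mathcal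 D})-\frac{u_j-u_{j-1}}{e}\}$. *)

From mathcomp Require Import all_boot all_order all_algebra.
Set Implicit Arguments. Unset Strict Implicit. Unset Printing Implicit Defensive.
Import Order.TTheory GRing.Theory Num.Theory.

(* Generator vectors are indexed by 'I_k.  For the semigroup S we use
   g = (e, a_1, ..., a_t) and for B we use D = (e, d_1, ..., d_t). *)

Definition gens (e t : nat) (a : 'I_t -> nat) : 'I_t.+1 -> nat :=
  fun k => match unlift ord0 k with None => e | Some j => a j end.

Definition dgens (e t : nat) (a : 'I_t -> nat) : 'I_t.+1 -> nat :=
  fun k => match unlift ord0 k with None => e | Some j => a j - e end.

Definition inMon (k : nat) (g : 'I_k -> nat) (b : nat) : Prop :=
  exists c : 'I_k -> nat, \sum_(j < k) c j * g j = b.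

(* the set of all factorizations of b w.r.t. g; since all generators are
   positive, every entry of a factorization of b is <= b, so entries are
   taken in 'I_b.+1 without loss *)
Definition facts (k : nat) (g : 'I_k -> nat) (b : nat)
  : {set {ffun 'I_k -> 'I_b.+1}} :=
  [set c : {ffun 'I_k -> 'I_b.+1} | \sum_(j < k) (c j : nat) * g j == b].

Definition flen (k m : nat) (c : {ffun 'I_k -> 'I_m}) : nat :=
  \sum_(j < k) (c j : nat).

Definition ordS (k : nat) (g : 'I_k -> nat) (b : nat) : nat :=
  \max_(c in facts g b) flen c.

Definition dmax (k : nat) (g : 'I_k -> nat) (b : nat) : nat :=
  #|[set c in facts g b | flen c == ordS g b]|.

(* min ord(b) : minimal length of a factorization (lengths are <= b, so b is
   a neutral starting value) *)
Definition minord (k : nat) (g : 'I_k -> nat) (b : nat) : nat :=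
  \big[minn/b]_(c in facts g b) flen c.

Definition adj (e k : nat) (g : 'I_k -> nat) (s : nat) : nat :=
  s - ordS g s * e.

Definition inAdjS (e k : nat) (g : 'I_k -> nat) (i u : nat) : Prop :=
  exists s, [/\ inMon g s, s %% e = i & adj e g s = u].

(* pu is the predecessor of u in adj(S_i): None if u is the minimum u_0,
   Some u' if u' = u_{j-1} where u = u_j *)
Definition is_pred (e k : nat) (g : 'I_k -> nat) (i u : nat)
  (pu : option nat) : Prop :=
  match pu with
  | None => forall v, inAdjS e g i v -> u <= v
  | Some u' => [/\ inAdjS e g i u', u' < u &
                 forall v, inAdjS e g i v -> v < u -> v <= u']
  end.

Definition Rset (e k : nat) (D : 'I_k -> nat) (pu : option nat) (u : nat)
  : {set {ffun 'I_k -> 'I_u.+1}} :=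
  match pu with
  | None => facts D u
  | Some u' => [set x in facts D u |
       ((flen x)%:Q < (minord D u')%:Q - (u%:Q - u'%:Q) / e%:Q)%R]
  end.

Definition min_gens_numsg (e t : nat) (a : 'I_t -> nat) : Prop :=
  [/\ 0 < e,
      (forall j : 'I_t, e < a j),
      (forall j j' : 'I_t, j < j' -> a j < a j'),
      (forall k : 'I_t.+1, ~ exists c : 'I_t.+1 -> nat,
          c k = 0 /\ \sum_(j < t.+1) c j * gens e a j = gens e a k) &
      (exists N, forall m, N <= m -> inMon (gens e a) m)].

(* Since a_j = e + d_j, an S-factorization c of n of length l gives
   n = l e + sum_{j>0} c_j d_j.  For c of maximal length ord(n), zeroing the
   e-coordinate therefore yields a B^D-factorization of adj(n), and c is
   recovered from it and ord(n): this injects the factorizations counted by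
   d_max(n) into P(adj(n)).  Each image x lies in R(adj(n)): with u = adj(n),
   its predecessor u' in adj(S_i) and q = (u - u')/e (an integer, as
   u = n = u' mod e), a factorization y of u' with |y| <= |x| + q would give,
   after adding e-coordinates up to total length ord(n) + q + y_0, an
   S-factorization of n = ord(n) e + q e + u' longer than ord(n). *)

From Pilot Require Import Defs.
From mathcomp Require Import all_boot all_order all_algebra.
From mathcomp Require Import zify.
(* Re-imported so that [ordS] denotes [Defs.ordS], not fintype's successor. *)
Import Defs.
Import GRing.Theory Num.Theory.

Set Implicit Arguments.
Unset Strict Implicit.
Unset Printing Implicit Defensive.

Definition coefs (k m : nat) (c : {ffun 'I_k -> 'I_m}) : 'I_k -> nat :=
  fun j => c j.

(* Entries are truncated into 'I_b.+1; harmless for an actual factorization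
   of b, see tofact_val. *)
Definition tofact (k b : nat) (f : 'I_k -> nat) : {ffun 'I_k -> 'I_b.+1} :=
  [ffun j => inord (f j)].

Definition with_ecoef (k : nat) (f : 'I_k.+1 -> nat) (v : nat) :
  'I_k.+1 -> nat :=
  fun j => if j == ord0 then v else f j.

Lemma with_ecoef_ord0 k (f : 'I_k.+1 -> nat) v : with_ecoef f v ord0 = v.
Proof. by rewrite /with_ecoef eqxx. Qed.

Lemma with_ecoef_lift k (f : 'I_k.+1 -> nat) v j :
  with_ecoef f v (lift ord0 j) = f (lift ord0 j).
Proof. by rewrite /with_ecoef eq_sym (negbTE (neq_lift _ _)). Qed.

Lemma sum_with_ecoef k (f : 'I_k.+1 -> nat) v :
  \sum_(j < k.+1) with_ecoef f v j = v + \sum_(j < k) f (lift ord0 j).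
Proof. by rewrite big_ord_recl with_ecoef_ord0. Qed.

Lemma with_ecoef0_inj k m (c1 c2 : {ffun 'I_k.+1 -> 'I_m}) :
  flen c1 = flen c2 -> with_ecoef (coefs c1) 0 =1 with_ecoef (coefs c2) 0 ->
  c1 = c2.
Proof.
move=> eq_len eq_drop.
have eq_lift j : c1 (lift ord0 j) = c2 (lift ord0 j) :> nat.
  by have := eq_drop (lift ord0 j); rewrite !with_ecoef_lift.
apply/ffunP => j; apply: val_inj; case: (unliftP ord0 j) => [j' ->|->].
  exact: eq_lift.
move/eqP: eq_len; rewrite /flen !big_ord_recl (eq_bigr _ (fun j _ => eq_lift j)).
by rewrite eqn_add2r => /eqP.
Qed.

Section Factorizations.

Variables (k : nat) (g : 'I_k -> nat).
Hypothesis g_gt0 : forall j, 0 < g j.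

Lemma tofact_val f b :
  \sum_(j < k) f j * g j = b -> forall j, tofact b f j = f j :> nat.
Proof.
move=> fb j; rewrite ffunE inordK // ltnS -fb (bigD1 j) //=.
by apply: leq_trans (leq_addr _ _); rewrite leq_pmulr.
Qed.

Lemma tofact_facts f b : \sum_(j < k) f j * g j = b -> tofact b f \in facts g b.
Proof.
move=> fb; rewrite inE; apply/eqP; rewrite -[RHS]fb.
by apply: eq_bigr => j _; rewrite (tofact_val fb).
Qed.

Lemma flen_tofact f b :
  \sum_(j < k) f j * g j = b -> flen (tofact b f) = \sum_(j < k) f j.
Proof. by move=> fb; apply: eq_bigr => j _; rewrite (tofact_val fb). Qed.

Lemma leq_ordS b (c : {ffun 'I_k -> 'I_b.+1}) :
  c \in facts g b -> flen c <= ordS g b.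
Proof. exact: (@leq_bigmax_cond _ (mem (facts g b)) (fun c => flen c)). Qed.

Lemma ordS_attained b :
  inMon g b -> exists2 c, c \in facts g b & flen c = ordS g b.
Proof.
move=> [f fb]; have nonempty : 0 < #|facts g b|.
  by apply/card_gt0P; exists (tofact b f); apply: tofact_facts.
by have [c c_in max_c] := eq_bigmax_cond (fun c => flen c) nonempty; exists c.
Qed.

Lemma flen_mul_le m b c :
  (forall j, m <= g j) -> c \in facts g b -> flen c * m <= b.
Proof.
move=> m_le /[!inE] /eqP c_w; rewrite -[leqRHS]c_w /flen big_distrl.
by apply: leq_sum => j _; rewrite leq_mul.
Qed.

Lemma ordS_mul_le m b : (forall j, m <= g j) -> ordS g b * m <= b.
Proof.
move=> m_le; apply: (big_ind (fun v => v * m <= b)) => //.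
- by move=> v w; rewrite maxnMl geq_max => ->.
- by move=> c; apply: flen_mul_le.
Qed.

Lemma minord_attained b :
  facts g b != set0 -> exists2 c, c \in facts g b & flen c <= minord g b.
Proof.
move=> /set0Pn [c0 c0_in].
apply: (big_ind (fun v => exists2 c, c \in facts g b & flen c <= v)).
- by exists c0 => //; rewrite -[flen c0]muln1; apply: flen_mul_le.
- move=> v w [c1 c1_in le1] [c2 c2_in le2].
  by case: leqP => _; [exists c1 | exists c2].
- by move=> c c_in; exists c.
Qed.

End Factorizations.

Lemma rat_gap_lt (X M u u' e : nat) :
  0 < e -> u' <= u -> X * e + (u - u') < M * e ->
  (X%:Q < M%:Q - (u%:Q - u'%:Q) / e%:Q)%R.
Proof.
move=> e_gt0 le_u' lt_nat; rewrite -natrB // ltrBrDr.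
have -> : (X%:Q + (u - u')%:R / e%:R = (X * e + (u - u'))%:R / e%:R)%R.
  by rewrite natrD natrM mulrDl mulfK // pnatr_eq0 -lt0n.
by rewrite ltr_pdivrMr ?ltr0n // -natrM ltr_nat.
Qed.

Section NumericalSemigroup.

Variables (e t : nat) (a : 'I_t -> nat).
Hypotheses (e_gt0 : 0 < e) (e_lt_a : forall j, e < a j).

Local Notation g := (gens e a).
Local Notation D := (dgens e a).

Lemma gens_ge j : e <= g j.
Proof. by rewrite /gens; case: (unlift ord0 j) => // j'; apply: ltnW. Qed.

Lemma gens_gt0 j : 0 < g j.
Proof. exact: leq_trans (gens_ge j). Qed.

Lemma dgens_gt0 j : 0 < D j.
Proof. by rewrite /dgens; case: (unlift ord0 j) => // j'; rewrite subn_gt0. Qed.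

Definition tail_weight (f : 'I_t.+1 -> nat) : nat :=
  \sum_(j < t) f (lift ord0 j) * (a j - e).

Lemma tail_weight_with_ecoef f v : tail_weight (with_ecoef f v) = tail_weight f.
Proof. by apply: eq_bigr => j _; rewrite with_ecoef_lift. Qed.

Lemma weight_gens f :
  \sum_(j < t.+1) f j * g j = (\sum_(j < t.+1) f j) * e + tail_weight f.
Proof.
rewrite !big_ord_recl mulnDl big_distrl -addnA /gens unlift_none -big_split /=.
congr (_ + _); apply: eq_bigr => j _; rewrite liftK -mulnDr subnKC //.
exact: ltnW.
Qed.

Lemma weight_dgens f : \sum_(j < t.+1) f j * D j = f ord0 * e + tail_weight f.
Proof.
rewrite big_ord_recl /dgens unlift_none; congr (_ + _).
by apply: eq_bigr => j _; rewrite liftK.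
Qed.

Lemma adj_mod s : adj e g s = s %[mod e].
Proof. by rewrite -{2}(subnKC (ordS_mul_le s gens_ge)) modnMDl. Qed.

Lemma weight_max_fact s c : c \in facts g s -> flen c = ordS g s ->
  \sum_(j < t.+1) with_ecoef (coefs c) 0 j * D j = adj e g s.
Proof.
move=> /[!inE] /eqP c_w c_max.
have := weight_gens (coefs c); rewrite -[\sum_j coefs c j]/(flen c) c_max c_w.
rewrite weight_dgens with_ecoef_ord0 tail_weight_with_ecoef /adj.
by move: (ordS g s) (tail_weight _) => o w ->; rewrite addKn.
Qed.

Lemma max_fact_gap n c u' y :
  c \in facts g n -> flen c = ordS g n -> y \in facts D u' ->
  u' = adj e g n %[mod e] -> u' < adj e g n ->
  (\sum_(j < t.+1) with_ecoef (coefs c) 0 j) * e + (adj e g n - u') < flen y * e.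
Proof.
move=> c_in c_max /[!inE] /eqP y_w u'_mod lt_u'.
set o := ordS g n in c_max *; set u := adj e g n in u'_mod lt_u' *.
have n_eq : n = o * e + u by rewrite subnKC // ordS_mul_le //; exact: gens_ge.
have /dvdnP [q gap] : e %| u - u' by rewrite -eqn_mod_dvd ?(ltnW lt_u') // u'_mod.
have q_gt0 : 0 < q by move: lt_u'; rewrite -subn_gt0 gap muln_gt0 => /andP [].
rewrite gap -mulnDl ltn_pmul2r // ltnNge; apply/negP => y_short.
set Tc := \sum_(j < t) coefs c (lift ord0 j).
set Ty := \sum_(j < t) coefs y (lift ord0 j).
have c_len : coefs c ord0 + Tc = o by rewrite -c_max [flen c]big_ord_recl.
have y_len : flen y = coefs y ord0 + Ty by rewrite [flen y]big_ord_recl.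
have y_wD : coefs y ord0 * e + tail_weight (coefs y) = u' by rewrite -weight_dgens.
rewrite sum_with_ecoef y_len in y_short.
pose z := with_ecoef (coefs y) (o + q + coefs y ord0 - Ty).
have z_len : \sum_(j < t.+1) z j = o + q + coefs y ord0.
  by rewrite sum_with_ecoef subnK //; lia.
have z_w : \sum_(j < t.+1) z j * g j = n.
  rewrite weight_gens z_len tail_weight_with_ecoef n_eq -(subnK (ltnW lt_u')) gap.
  rewrite !mulnDl; lia.
have := leq_ordS (tofact_facts gens_gt0 z_w).
by rewrite (flen_tofact gens_gt0 z_w) z_len; lia.
Qed.

Definition drop_e (n : nat) (c : {ffun 'I_t.+1 -> 'I_n.+1})
  : {ffun 'I_t.+1 -> 'I_(adj e g n).+1} :=
  tofact (adj e g n) (with_ecoef (coefs c) 0).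

Lemma drop_e_facts n c : c \in facts g n -> flen c = ordS g n ->
  drop_e c \in facts D (adj e g n).
Proof.
by move=> c_in c_max; exact (tofact_facts dgens_gt0 (weight_max_fact c_in c_max)).
Qed.

Lemma drop_e_inj n :
  {in [set c in facts g n | flen c == ordS g n] &, injective (@drop_e n)}.
Proof.
move=> c1 c2 /setIdP [c1_in /eqP c1_max] /setIdP [c2_in /eqP c2_max] eq12.
apply: with_ecoef0_inj; first by rewrite c1_max c2_max.
move=> j; rewrite -(tofact_val dgens_gt0 (weight_max_fact c1_in c1_max)).
by rewrite -(tofact_val dgens_gt0 (weight_max_fact c2_in c2_max)) -/(drop_e c1) eq12.
Qed.

Lemma drop_e_Rset n i pu c : n %% e = i -> is_pred e g i (adj e g n) pu ->
  c \in facts g n -> flen c = ordS g n -> drop_e c \in Rset e D pu (adj e g n).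
Proof.
move=> n_mod pred_u c_in c_max; have drop_in := drop_e_facts c_in c_max.
case: pu pred_u => [u'|] //= [[s' [s'_in s'_mod <-{u'}]] lt_u' _].
rewrite inE drop_in /=.
have [d d_in d_max] := ordS_attained gens_gt0 s'_in.
have [|y y_in y_min] := minord_attained dgens_gt0 (b := adj e g s').
  by apply/set0Pn; exists (drop_e d); apply: drop_e_facts.
apply: rat_gap_lt (ltnW lt_u') _ => //.
rewrite (flen_tofact dgens_gt0 (weight_max_fact c_in c_max)).
apply: leq_trans (max_fact_gap c_in c_max y_in _ lt_u') _.
  by rewrite !adj_mod s'_mod n_mod.
by rewrite leq_mul2r y_min orbT.
Qed.

End NumericalSemigroup.

Theorem theorem3p7 (e t : nat) (a : 'I_t -> nat) (n i : nat) :
  min_gens_numsg e a ->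
  inMon (gens e a) n -> i < e -> n %% e = i ->
  inAdjS e (gens e a) i (adj e (gens e a) n) /\
  (forall pu : option nat, is_pred e (gens e a) i (adj e (gens e a) n) pu ->
     dmax (gens e a) n <= #|Rset e (dgens e a) pu (adj e (gens e a) n)| /\
     Rset e (dgens e a) pu (adj e (gens e a) n) != set0).
Proof.
move=> [e_gt0 e_lt_a _ _ _] n_in _ n_mod.
split; first by exists n.
move=> pu pred_u.
have in_R c : c \in [set c in facts (gens e a) n | flen c == ordS (gens e a) n] ->
    drop_e e a c \in Rset e (dgens e a) pu (adj e (gens e a) n).
  case/setIdP => c_in /eqP c_max.
  exact: (drop_e_Rset e_gt0 e_lt_a n_mod pred_u c_in c_max).
split.
- rewrite /dmax -(card_in_imset (drop_e_inj e_gt0 e_lt_a (n := n))).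
  by apply/subset_leq_card/subsetP => _ /imsetP [c c_A ->]; apply: in_R.
- have [c c_in c_max] := ordS_attained (gens_gt0 e_gt0 e_lt_a) n_in.
  by apply/set0Pn; exists (drop_e e a c); apply: in_R; rewrite inE c_in c_max eqxx.
Qed.
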